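(* Let $X,Y,Z$ be topological spaces, $f:X\times Y\to Z$ a mapping, and $V\subset Y$ a nonempty open set. Suppose that one of the following holds: (i) $f$ is vertically quasicontinuous at every point of $X\times V$, and for each $x\in X$ there is a dense subset $D_x$ of the space $V$ such that $f$ is lower $X$-quasicontinuous at every point of $\{x\}\times D_x$; (ii) $f$ is lower $Y$-quasicontinuous at every point of $X\times V$, and there is a dense subset $D$ of the space $V$ such that $f$ is lower $X$-quasicontinuous at every point of $X\times D$. Then the set-valued mapping $F^V:X\ni x\mapsto f_x(V)\in 2^Z$ is lower quasicontinuous.
   Context: $f_x(y)=f(x,y)$; $2^Z$ is the set of nonempty subsets of $Z$. A set-valued mapping $F:X\to 2^Z$ is lower quasicontinuous if for each $x_0\in X$, each neighborhood $U$ of $x_0$ and each open $W\subset Z$ with $F(x_0)\cap W\neq\emptyset$, there is an open $O\subset X$ with $\emptyset\ne O\subset U$ and $F(x)\cap W\neq\emptyset$ for every $x\in O$. The mapping $f$ is lower $X$-quasicontinuous (lower quasicontinuous with respect to the variable $x$) at $(a,b)$ if for each neighborhood $U$ of $a$ in $X$, each neighborhood $V'$ of $b$ in $Y$, and each neighborhood $W$ of $f(a,b)$ in $Z$, there is an open $O\subset X$ with $\emptyset\neq O\subset U$ and $f(\{x\}\times V')\cap W\neq\emptyset$ for every $x\in O$. Symmetrically, $f$ is lower $Y$-quasicontinuous at $(a,b)$ if for all such $U,V',W$ there is an open $O\subset Y$ with $\emptyset\ne O\subset V'$ and $f(U\times\{y\})\cap W\neq\emptyset$ for every $y\in O$. The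 mapping $f$ is vertically quasicontinuous at $(a,b)$ if for all such $U,V',W$ there are a point $x\in U$ and an open $O\subset Y$ with $\emptyset\neq O\subset V'$ and $f(\{x\}\times O)\subset W$. *)

From Stdlib Require Import Classical.

Set Implicit Arguments.

Record TopSpace := {
  carrier :> Type;
  is_open : (carrier -> Prop) -> Prop;
  open_empty : is_open (fun _ => False);
  open_full : is_open (fun _ => True);
  open_inter : forall A B, is_open A -> is_open B -> is_open (fun x => A x /\ B x);
  open_union : forall (I : Type) (F : I -> carrier -> Prop),
      (forall i, is_open (F i)) -> is_open (fun x => exists i, F i x)
}.

Arguments is_open {t}.

Definition nbhd {T : TopSpace} (x : T) (U : T -> Prop) : Prop :=
  exists O, is_open O /\ O x /\ (forall z, O z -> U z).

(* D is a dense subset of the (subspace) V: D ⊆ V and every open set of the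
   ambient space meeting V meets D. *)
Definition dense_in {T : TopSpace} (D V : T -> Prop) : Prop :=
  (forall y, D y -> V y) /\
  (forall W, is_open W -> (exists y, W y /\ V y) -> exists y, W y /\ D y).

(* Lower quasicontinuity of a set-valued mapping F : X -> 2^Z
   (F is given as a relation: F x z means z ∈ F(x)). *)
Definition lower_qc {X Z : TopSpace} (F : X -> Z -> Prop) : Prop :=
  forall (x0 : X) (U : X -> Prop) (W : Z -> Prop),
    nbhd x0 U -> is_open W -> (exists z, F x0 z /\ W z) ->
    exists O : X -> Prop, is_open O /\ (exists x, O x) /\
      (forall x, O x -> U x) /\
      (forall x, O x -> exists z, F x z /\ W z).

Definition lower_X_qc {X Y Z : TopSpace} (f : X -> Y -> Z) (a : X) (b : Y) : Prop :=
  forall (U : X -> Prop) (V' : Y -> Prop) (W : Z -> Prop),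
    nbhd a U -> nbhd b V' -> nbhd (f a b) W ->
    exists O : X -> Prop, is_open O /\ (exists x, O x) /\
      (forall x, O x -> U x) /\
      (forall x, O x -> exists y, V' y /\ W (f x y)).

Definition lower_Y_qc {X Y Z : TopSpace} (f : X -> Y -> Z) (a : X) (b : Y) : Prop :=
  forall (U : X -> Prop) (V' : Y -> Prop) (W : Z -> Prop),
    nbhd a U -> nbhd b V' -> nbhd (f a b) W ->
    exists O : Y -> Prop, is_open O /\ (exists y, O y) /\
      (forall y, O y -> V' y) /\
      (forall y, O y -> exists x, U x /\ W (f x y)).

Definition vert_qc {X Y Z : TopSpace} (f : X -> Y -> Z) (a : X) (b : Y) : Prop :=
  forall (U : X -> Prop) (V' : Y -> Prop) (W : Z -> Prop),
    nbhd a U -> nbhd b V' -> nbhd (f a b) W ->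
    exists x : X, U x /\
    exists O : Y -> Prop, is_open O /\ (exists y, O y) /\
      (forall y, O y -> V' y) /\
      (forall y, O y -> W (f x y)).

Definition FV {X Y Z : TopSpace} (f : X -> Y -> Z) (V : Y -> Prop) : X -> Z -> Prop :=
  fun x z => exists y, V y /\ f x y = z.


(* Both hypotheses (i) and (ii) serve only to move from (x0, y0) to a nearby
   point (x1, y1) of U × V with f(x1, y1) still in W at which f is lower
   X-quasicontinuous: in (i) vertical quasicontinuity gives x1 and an open set
   of y's, which the dense set D_x1 meets; in (ii) lower Y-quasicontinuity
   gives an open set of y's, which D meets, and then x1.  Lower
   X-quasicontinuity at (x1, y1), applied with the neighbourhood V of y1,
   yields the open set required by lower quasicontinuity of F^V. *)

Lemma open_nbhd {T : TopSpace} (O : T -> Prop) (x : T) :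
  is_open O -> O x -> nbhd x O.
Proof. intros HO Ox. exists O. auto. Qed.

Lemma dense_in_meets_open {T : TopSpace} (D V O : T -> Prop) :
  dense_in D V -> is_open O -> (exists y, O y) -> (forall y, O y -> V y) ->
  exists y, O y /\ D y.
Proof.
  intros [_ Hdense] HO [y Oy] OV.
  apply Hdense; [exact HO | exists y; auto].
Qed.

Section LowerQuasicontinuityOfSections.

Context {X Y Z : TopSpace} (f : X -> Y -> Z) (V : Y -> Prop).
Hypothesis hVopen : is_open V.

Definition lower_X_qc_point_in (U : X -> Prop) (W : Z -> Prop) : Prop :=
  exists x1 y1, U x1 /\ V y1 /\ W (f x1 y1) /\ lower_X_qc f x1 y1.

Lemma lower_qc_FV_of_lower_X_qc_points :
  (forall (x0 : X) (y0 : Y) (U : X -> Prop) (W : Z -> Prop),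
     is_open U -> U x0 -> V y0 -> is_open W -> W (f x0 y0) ->
     lower_X_qc_point_in U W) ->
  lower_qc (FV f V).
Proof.
  intros Hpoint x0 U W [U0 [HU0 [U0x0 U0U]]] HW [z [[y0 [Vy0 <-]] Wz]].
  destruct (Hpoint x0 y0 U0 W HU0 U0x0 Vy0 HW Wz)
    as [x1 [y1 [U0x1 [Vy1 [Wf Hqc]]]]].
  destruct (Hqc U0 V W (open_nbhd U0 x1 HU0 U0x1) (open_nbhd V y1 hVopen Vy1)
              (open_nbhd W _ HW Wf)) as [O [HO [Hne [OU0 OW]]]].
  exists O. split; [exact HO | split; [exact Hne | split]].
  - intros x Ox. apply U0U, OU0, Ox.
  - intros x Ox. destruct (OW x Ox) as [y [Vy Wy]].
    exists (f x y). split; [exists y; auto | exact Wy].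
Qed.

Lemma lower_X_qc_point_of_vert_qc
  (x0 : X) (y0 : Y) (U : X -> Prop) (W : Z -> Prop) :
  vert_qc f x0 y0 ->
  (forall x, exists Dx, dense_in Dx V /\ forall y, Dx y -> lower_X_qc f x y) ->
  is_open U -> U x0 -> V y0 -> is_open W -> W (f x0 y0) ->
  lower_X_qc_point_in U W.
Proof.
  intros Hvert Hdense HU Ux0 Vy0 HW Wf.
  destruct (Hvert U V W (open_nbhd U x0 HU Ux0) (open_nbhd V y0 hVopen Vy0)
              (open_nbhd W _ HW Wf)) as [x1 [Ux1 [O [HO [Hne [OV OW]]]]]].
  destruct (Hdense x1) as [Dx [HDx Hqc]].
  destruct (dense_in_meets_open _ _ _ HDx HO Hne OV) as [y1 [Oy1 Dy1]].
  exists x1, y1. repeat split; auto.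
Qed.

Lemma lower_X_qc_point_of_lower_Y_qc
  (x0 : X) (y0 : Y) (U : X -> Prop) (W : Z -> Prop) (D : Y -> Prop) :
  lower_Y_qc f x0 y0 -> dense_in D V -> (forall x y, D y -> lower_X_qc f x y) ->
  is_open U -> U x0 -> V y0 -> is_open W -> W (f x0 y0) ->
  lower_X_qc_point_in U W.
Proof.
  intros HY HD Hqc HU Ux0 Vy0 HW Wf.
  destruct (HY U V W (open_nbhd U x0 HU Ux0) (open_nbhd V y0 hVopen Vy0)
              (open_nbhd W _ HW Wf)) as [O [HO [Hne [OV OW]]]].
  destruct (dense_in_meets_open _ _ _ HD HO Hne OV) as [y1 [Oy1 Dy1]].
  destruct (OW y1 Oy1) as [x1 [Ux1 Wf1]].
  exists x1, y1. repeat split; auto.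
Qed.

End LowerQuasicontinuityOfSections.

Theorem proposition2p3 (X Y Z : TopSpace) (f : X -> Y -> Z) (V : Y -> Prop)
  (hVopen : is_open V) (hVne : exists y, V y) :
  ( (forall x y, V y -> vert_qc f x y) /\
    (forall x : X, exists Dx : Y -> Prop, dense_in Dx V /\
        (forall y, Dx y -> lower_X_qc f x y)) )
  \/
  ( (forall x y, V y -> lower_Y_qc f x y) /\
    (exists D : Y -> Prop, dense_in D V /\
        (forall x y, D y -> lower_X_qc f x y)) ) ->
  lower_qc (FV f V).
Proof.
  intros [[Hvert Hdense] | [HY [D [HD Hqc]]]];
    apply (lower_qc_FV_of_lower_X_qc_points f V hVopen);
    intros x0 y0 U W HU Ux0 Vy0 HW Wf.
  - apply (lower_X_qc_point_of_vert_qc f V hVopen x0 y0 U W); auto.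
  - apply (lower_X_qc_point_of_lower_Y_qc f V hVopen x0 y0 U W D); auto.
Qed.
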